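(* Let $\alpha\in(0,1]$ and let $d\ge 144/\alpha^2$. Let $G$ be a bipartite $d$-regular graph with parts $V_1,V_2$, $|V_1|=|V_2|=n$, such that for all nonempty $A\subseteq V_1$ and $B\subseteq V_2$, $\bigl|e(A,B)-\tfrac{d}{n}|A||B|\bigr|<\lambda\sqrt{|A||B|}$ with $\lambda=2\sqrt{d-1}$. Suppose $U\subseteq V_1$ and $W\subseteq V_2$ satisfy $|U|=|W|=\alpha n$, $\deg(w,U)\ge\alpha d/3$ for every $w\in W$ and $\deg(u,W)\ge\alpha d/3$ for every $u\in U$. Then $G[U,W]$ contains a perfect matching.
   Context: $e(A,B)$ is the number of edges between $A$ and $B$; $\deg(v,S)$ is the number of neighbours of $v$ in $S$; $G[U,W]$ is the bipartite subgraph of $G$ induced between $U$ and $W$. *)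

From HB Require Import structures.
From mathcomp Require Import all_boot all_order all_algebra.
Set Implicit Arguments. Unset Strict Implicit. Unset Printing Implicit Defensive.

(* A bipartite graph with parts T1 (= V1) and T2 (= V2) is given by its
   adjacency relation adj : T1 -> T2 -> bool (edges only go between parts). *)

Definition e_between (T1 T2 : finType) (adj : T1 -> T2 -> bool)
  (A : {set T1}) (B : {set T2}) : nat :=
  #|[set p : T1 * T2 | [&& p.1 \in A, p.2 \in B & adj p.1 p.2]]|.

Definition deg1 (T1 T2 : finType) (adj : T1 -> T2 -> bool) (u : T1) (W : {set T2}) : nat :=
  #|[set w in W | adj u w]|.

Definition deg2 (T1 T2 : finType) (adj : T1 -> T2 -> bool) (w : T2) (U : {set T1}) : nat :=
  #|[set u in U | adj u w]|.

Definition has_perfect_matching (T1 T2 : finType) (adj : T1 -> T2 -> bool)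
  (U : {set T1}) (W : {set T2}) : Prop :=
  exists f : T1 -> T2,
    [/\ {in U &, injective f}, f @: U = W & forall u, u \in U -> adj u (f u)].

From HB Require Import structures.
From mathcomp Require Import all_boot all_order all_algebra.
From mathcomp Require Import zify ring lra.
Import Order.TTheory GRing.Theory Num.Theory.

(* If S ⊆ U had |N(S)| < |S| then either
      S is small (|S| <= αn/6) and e(S,N(S)) >= |S| αd/3 is too large for
      the mixing bound; or W \ N(S) is large and the edgeless pair
      (S, W \ N(S)) of two large sets violates the mixing bound; or
      W \ N(S) is small and, since its U-neighbours lie in U \ S, which is
      smaller than it, the first case applies with the sides swapped. *)

Lemma setUDK (T : finType) (A B : {set T}) : B \subset A -> B :|: (A :\: B) = A.
Proof.
move=> sBA; apply/setP=> x; rewrite !inE.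
by case: (boolP (x \in B)) => //= /(subsetP sBA) ->.
Qed.

Lemma disjoint_setD {T : finType} (A B : {set T}) : [disjoint B & A :\: B].
Proof. by rewrite disjoint_sym disjoints_subset setDE subsetIr. Qed.

(* A map T1 -> T2 exists as soon as |T1| <= |T2| (T1 is empty if T2 is);
   it serves as the default value of matchings of empty sets. *)
Lemma map_of_card_le (T1 T2 : finType) : #|T1| <= #|T2| -> inhabited (T1 -> T2).
Proof.
case: (pickP (@predT T2)) => [w0 _ _|noT2 le12]; first by constructor=> _; exact: w0.
have T2_0 : #|T2| = 0 by apply: eq_card0 => w; have := noT2 w.
have T1_0 : #|T1| = 0 by apply/eqP; rewrite -leqn0 -T2_0.
by constructor=> x; exfalso; move: (card0_eq T1_0 x); rewrite !inE.
Qed.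

Section Hall.
Context {T1 T2 : finType} (adj : T1 -> T2 -> bool).
Implicit Types (U S A B : {set T1}) (W X Y : {set T2}) (f g h : T1 -> T2).

Definition nbh (W : {set T2}) (S : {set T1}) : {set T2} :=
  [set w in W | [exists u in S, adj u w]].

Definition hall_condition (U : {set T1}) (W : {set T2}) : Prop :=
  forall S : {set T1}, S \subset U -> #|S| <= #|nbh W S|.

Definition matches (f : T1 -> T2) (A : {set T1}) (X : {set T2}) : Prop :=
  [/\ {in A &, injective f}, {in A, forall u, f u \in X}
    & {in A, forall u, adj u (f u)}].

Lemma nbh_sub W S : nbh W S \subset W.
Proof. by apply/subsetP=> w; rewrite inE => /andP[]. Qed.

Lemma mem_nbh {W S u w} : u \in S -> w \in W -> adj u w -> w \in nbh W S.
Proof. by move=> uS wW uw; rewrite inE wW; apply/existsP; exists u; rewrite uS. Qed.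

Lemma matches_nbh {f A W} : matches f A W -> matches f A (nbh W A).
Proof.
by case=> finj fW fadj; split=> // u uA; exact: mem_nbh uA (fW u uA) (fadj u uA).
Qed.

Lemma matches_glue {g h A B X Y} : matches g A X -> matches h B Y ->
  [disjoint X & Y] ->
  matches (fun u => if u \in A then g u else h u) (A :|: B) (X :|: Y).
Proof.
case=> ginj gX gadj [hinj hY hadj] dXY.
have AB u : u \in A :|: B -> u \notin A -> u \in B.
  by rewrite inE => /orP[-> //|].
split.
- move=> u1 u2 u1AB u2AB.
  case: (boolP (u1 \in A)) => u1A; case: (boolP (u2 \in A)) => u2A.
  + exact: ginj.
  + move=> eq12; have := disjointFr dXY (gX u1 u1A).
    by rewrite eq12 hY // AB.
  + move=> eq12; have := disjointFr dXY (gX u2 u2A).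
    by rewrite -eq12 hY // AB.
  + by apply: hinj; apply: AB.
- move=> u uAB; rewrite inE.
  by case: ifP => uA; rewrite ?gX ?hY ?orbT // AB ?uA.
- by move=> u uAB; case: ifP => uA; [apply: gadj | apply: hadj; rewrite AB ?uA].
Qed.

Lemma hall_condition_sub {U W S0} :
  S0 \subset U -> hall_condition U W -> hall_condition S0 W.
Proof. by move=> sS0U hH S sSS0; apply: hH (subset_trans sSS0 sS0U). Qed.

Lemma hall_condition_critical {U W S0} :
  S0 \subset U -> hall_condition U W -> #|nbh W S0| <= #|S0| ->
  hall_condition (U :\: S0) (W :\: nbh W S0).
Proof.
move=> sS0U hH critS0 S sS.
have dSS0 : [disjoint S & S0].
  by rewrite disjoints_subset (subset_trans sS) // setDE subsetIr.
have nbhU : nbh W (S :|: S0) \subset nbh (W :\: nbh W S0) S :|: nbh W S0.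
  apply/subsetP=> w; rewrite [w \in nbh _ _]inE => /andP[wW /existsP[u /andP[]]].
  rewrite inE => /orP[uS|uS0] uw; rewrite in_setU.
    apply/orP; case: (boolP (w \in nbh W S0)) => wN; [by right | left].
    by rewrite (mem_nbh uS _ uw) // inE wN.
  by rewrite (mem_nbh uS0 wW uw) orbT.
have sSU : S :|: S0 \subset U.
  by rewrite subUset sS0U andbT (subset_trans sS) ?subsetDl.
have cardSU : #|S :|: S0| = #|S| + #|S0|.
  by apply/eqP; rewrite (leq_card_setU S S0).2.
have := hH _ sSU; have := subset_leq_card nbhU.
have := (leq_card_setU (nbh (W :\: nbh W S0) S) (nbh W S0)).1.
rewrite cardSU; lia.
Qed.

Lemma hall_condition_surplus {U W u0} w1 : u0 \in U ->
  (forall S, S \subset U -> S != set0 -> S != U -> #|S| < #|nbh W S|) ->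
  hall_condition (U :\ u0) (W :\ w1).
Proof.
move=> u0U surplus S sS; have [->|nS] := eqVneq S set0; first by rewrite cards0.
have sSU : S \subset U := subset_trans sS (subsetDl U [set u0]).
have SU : S != U.
  by apply/eqP=> eqSU; move: (subsetP sS u0); rewrite eqSU !inE eqxx u0U => /(_ isT).
have nbhS : nbh W S \subset w1 |: nbh (W :\ w1) S.
  apply/subsetP=> w; rewrite [w \in nbh _ _]inE => /andP[wW /existsP[u /andP[uS uw]]].
  rewrite in_setU1; case: eqVneq => //= ww1.
  by rewrite (mem_nbh uS _ uw) // !inE ww1.
have := surplus S sSU nS SU; have := subset_leq_card nbhS.
rewrite cardsU1; lia.
Qed.

Lemma matches_const {u0 w1} : adj u0 w1 -> matches (fun _ => w1) [set u0] [set w1].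
Proof.
move=> u0w1; split=> [u1 u2|u|u]; rewrite ?inE.
- by move=> /eqP-> /eqP->.
- by [].
- by move=> /eqP->.
Qed.

Theorem hall (f0 : T1 -> T2) {U W} : hall_condition U W -> exists f, matches f U W.
Proof.
have [k] := ubnP #|U|; elim: k U W => // k IH U W ltUk hH.
have IHsub U' W' : #|U'| < #|U| -> hall_condition U' W' -> exists f, matches f U' W'.
  by move=> ltU'U; apply: IH; apply: leq_trans ltU'U _.
case: (boolP [exists S : {set T1},
          [&& S \subset U, S != set0, S != U & #|nbh W S| <= #|S|]]).
  case/existsP => S0 /and4P[sS0U nS0 S0U critS0].
  have [g gS0] : exists g, matches g S0 W.
    apply: IHsub (hall_condition_sub sS0U hH).
    by apply: proper_card; rewrite properEneq S0U.
  have [h hrest] : exists h, matches h (U :\: S0) (W :\: nbh W S0).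
    apply: IHsub (hall_condition_critical sS0U hH critS0).
    rewrite cardsDS //; have := subset_leq_card sS0U.
    rewrite -card_gt0 in nS0; lia.
  have := matches_glue (matches_nbh gS0) hrest (disjoint_setD _ _).
  by rewrite !setUDK ?nbh_sub // => fUW; eexists; exact: fUW.
move/existsPn => noCritical.
have [U0|[u0 u0U]] := set_0Vmem U.
  by exists f0; rewrite U0; split=> u; rewrite inE.
have surplus S : S \subset U -> S != set0 -> S != U -> #|S| < #|nbh W S|.
  by move=> sSU nS SU; have := noCritical S; rewrite sSU nS SU ltnNge.
have [w1 w1N] : exists w1, w1 \in nbh W [set u0].
  by apply/card_gt0P; rewrite -(cards1 u0); apply: hH; rewrite sub1set.
move: w1N; rewrite inE => /andP[w1W /existsP[u /andP[]]].
rewrite inE => /eqP-> u0w1.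
have [h hrest] : exists h, matches h (U :\ u0) (W :\ w1).
  apply: IHsub (hall_condition_surplus w1 u0U surplus).
  by rewrite (cardsD1 u0 U) u0U add1n.
have dw1 : [disjoint [set w1] & W :\ w1] by rewrite disjoints1 !inE eqxx.
have := matches_glue (matches_const u0w1) hrest dw1.
by rewrite !setD1K // => fUW; eexists; exact: fUW.
Qed.

Lemma matches_perfect {f U W} :
  matches f U W -> #|W| <= #|U| -> has_perfect_matching adj U W.
Proof.
case=> finj fW fadj leWU; exists f; split=> //.
apply/eqP; rewrite eqEcard card_in_imset // leWU andbT.
by apply/subsetP=> w /imsetP[u uU ->]; exact: fW.
Qed.

End Hall.

Section EdgeCounting.
Context {T1 T2 : finType} (adj : T1 -> T2 -> bool).
Implicit Types (A : {set T1}) (B : {set T2}).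

Lemma card_set_sum (T : finType) (P : pred T) : #|[set x | P x]| = \sum_x P x.
Proof. by rewrite -sum1_card big_mkcond /=; apply: eq_bigr => x _; rewrite inE. Qed.

Lemma e_between_double A B : e_between adj A B =
  \sum_(a : T1) \sum_(b : T2) [&& a \in A, b \in B & adj a b].
Proof.
rewrite /e_between card_set_sum.
by rewrite (pair_bigA _ (fun a b => [&& a \in A, b \in B & adj a b] : nat)).
Qed.

Lemma e_between_sum1 A B : e_between adj A B = \sum_(a in A) deg1 adj a B.
Proof.
rewrite e_between_double [RHS]big_mkcond /=; apply: eq_bigr => a _.
by rewrite /deg1 card_set_sum; case: (a \in A) => //=; rewrite big1.
Qed.

Lemma e_between_sum2 A B : e_between adj A B = \sum_(b in B) deg2 adj b A.
Proof.
rewrite e_between_double exchange_big [RHS]big_mkcond /=; apply: eq_bigr => b _.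
rewrite /deg2 card_set_sum; case: (b \in B) => /=.
  by apply: eq_bigr => a _; case: (a \in A).
by rewrite big1 // => a _; rewrite andbF.
Qed.

Lemma e_between_eq0 A B :
  (forall a b, a \in A -> b \in B -> ~~ adj a b) -> e_between adj A B = 0.
Proof.
move=> noEdge; apply/eqP; rewrite cards_eq0; apply/eqP/setP => -[a b].
by rewrite !inE /=; apply/and3P => -[aA bB]; apply/negP/noEdge.
Qed.

Local Open Scope ring_scope.

Lemma e_between_ge1 (R : numDomainType) A B (c : R) :
  {in A, forall a, c <= (deg1 adj a B)%:R} -> #|A|%:R * c <= (e_between adj A B)%:R.
Proof.
by move=> degA; rewrite e_between_sum1 natr_sum mulr_natl -sumr_const ler_sum.
Qed.

Lemma e_between_ge2 (R : numDomainType) A B (c : R) :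
  {in B, forall b, c <= (deg2 adj b A)%:R} -> #|B|%:R * c <= (e_between adj A B)%:R.
Proof.
by move=> degB; rewrite e_between_sum2 natr_sum mulr_natl -sumr_const ler_sum.
Qed.

End EdgeCounting.

Local Open Scope ring_scope.

(* Real inequalities behind the two uses of the mixing bound, with
   a = α, d the degree and n the size of the parts.  The hypothesis
   144 <= α² d is the bound d >= 144/α². *)
Lemma d_ge144 {R : rcfType} {a d : R} : 0 < a -> a <= 1 -> 144 <= a ^+ 2 * d ->
  144 <= d.
Proof.
move=> a_gt0 a_le1 d_large.
have a2_le1 : a ^+ 2 <= 1 by rewrite expr_le1 // ltW.
have d_gt0 : 0 < d.
  by rewrite -(pmulr_rgt0 _ (exprn_gt0 2 a_gt0)); apply: lt_le_trans d_large.
by apply: le_trans d_large _; rewrite ler_piMl // ltW.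
Qed.

(* A set of size s <= αn/6 sending at least αd/3 edges per vertex into a
   set of size t < s violates the mixing bound: e - (d/n) s t >= αds/6,
   whereas 2 √(d-1) √(st) < 2 √(d-1) s, which forces αd < 12 √(d-1). *)
Lemma no_sparse_small_pair {R : rcfType} {a d n s t e : R} :
  0 < a -> a <= 1 -> 144 <= a ^+ 2 * d ->
  0 < t -> t < s -> s <= a * n / 6 -> s * (a * d / 3) <= e ->
  ~ `|e - d / n * s * t| < 2 * Num.sqrt (d - 1) * Num.sqrt (s * t).
Proof.
move=> a_gt0 a_le1 d_large t_gt0 lt_ts s_small e_large mixing.
have d_ge1 : 1 <= d by have := d_ge144 a_gt0 a_le1 d_large; lra.
have n_gt0 : 0 < n by nra.
have q_ge0 := sqrtr_ge0 (d - 1); have q_sq := sqr_sqrtr (a := d - 1) ltac:(lra).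
have r_ge0 := sqrtr_ge0 (s * t); have r_sq := sqr_sqrtr (a := s * t) ltac:(nra).
move: q_ge0 q_sq r_ge0 r_sq mixing.
set q := Num.sqrt _; set r := Num.sqrt _ => q_ge0 q_sq r_ge0 r_sq mixing.
have dn_n : d / n * n = d by rewrite divfK // gt_eqF.
have dn_ge0 : 0 <= d / n by rewrite divr_ge0 //; lra.
move: dn_n dn_ge0 mixing; set m := d / n => dn_n dn_ge0 mixing.
have upper : e - m * s * t < 2 * q * r by apply: le_lt_trans (ler_norm _) mixing.
have mt_small : m * t <= a * d / 6 by nra.
have lower : s * (a * d / 6) < 2 * q * r by nra.
have r_le_s : r <= s by nra.
have ad_lt : a * d < 12 * q by nra.
have ad_sq : (a * d) ^+ 2 < (12 * q) ^+ 2 by rewrite ltr_pXn2r // nnegrE; nra.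
nra.
Qed.

(* Two sets of sizes s, w > αn/6 cannot be joined by no edge: otherwise
   (d/n) s w < 2 √(d-1) √(sw) gives d s w < 4 n², i.e. sw < (αn/6)². *)
Lemma no_empty_large_pair {R : rcfType} {a d n s w : R} :
  0 < a -> a <= 1 -> 144 <= a ^+ 2 * d ->
  0 < n -> a * n / 6 < s -> a * n / 6 < w ->
  ~ d / n * s * w < 2 * Num.sqrt (d - 1) * Num.sqrt (s * w).
Proof.
move=> a_gt0 a_le1 d_large n_gt0 s_large w_large mixing.
have d_ge1 : 1 <= d by have := d_ge144 a_gt0 a_le1 d_large; lra.
have an6_gt0 : 0 < a * n / 6 by rewrite divr_gt0 // mulr_gt0.
have q_ge0 := sqrtr_ge0 (d - 1); have q_sq := sqr_sqrtr (a := d - 1) ltac:(lra).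
have r_ge0 := sqrtr_ge0 (s * w); have r_sq := sqr_sqrtr (a := s * w) ltac:(nra).
move: q_ge0 q_sq r_ge0 r_sq mixing.
set q := Num.sqrt _; set r := Num.sqrt _ => q_ge0 q_sq r_ge0 r_sq mixing.
have dn_n : d / n * n = d by rewrite divfK // gt_eqF.
move: dn_n mixing; set m := d / n => dn_n mixing.
have r_gt0 : 0 < r by nra.
have dr_lt : d * r < 2 * n * q by nra.
have dr_sq : (d * r) ^+ 2 < (2 * n * q) ^+ 2 by rewrite ltr_pXn2r // nnegrE; nra.
have dsw_lt : d * (s * w) < 4 * n ^+ 2 by nra.
have sw_large : a * n / 6 * (a * n / 6) < s * w by nra.
have an6 : a * n / 6 * 6 = a * n by field.
nra.
Qed.

Section ExpanderMatching.
Context {R : rcfType} {alpha : R} {d n : nat} {T1 T2 : finType}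
  {adj : T1 -> T2 -> bool} {U : {set T1}} {W : {set T2}}.
Hypotheses (alpha_gt0 : 0 < alpha) (alpha_le1 : alpha <= 1)
  (d_large : 144 <= alpha ^+ 2 * d%:R)
  (mixing : forall (A : {set T1}) (B : {set T2}), A != set0 -> B != set0 ->
     `| (e_between adj A B)%:R - d%:R / n%:R * #|A|%:R * #|B|%:R |
       < 2 * Num.sqrt (d%:R - 1 : R) * Num.sqrt (#|A|%:R * #|B|%:R : R))
  (cardU : #|U|%:R = alpha * n%:R) (cardW : #|W|%:R = alpha * n%:R)
  (degW : forall w, w \in W -> alpha * d%:R / 3 <= (deg2 adj w U)%:R)
  (degU : forall u, u \in U -> alpha * d%:R / 3 <= (deg1 adj u W)%:R).

Lemma card_U_W : #|U| = #|W|.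
Proof. by apply/eqP; rewrite -(eqr_nat R) cardU cardW. Qed.

Lemma min_degree_gt0 : 0 < alpha * d%:R / 3.
Proof.
have := d_ge144 alpha_gt0 alpha_le1 d_large => d_ge144.
by rewrite divr_gt0 // mulr_gt0 // (lt_le_trans _ d_ge144).
Qed.

Lemma small_U_set_expands {S : {set T1}} {T : {set T2}} : S \subset U ->
  (forall a w, a \in S -> w \in W -> adj a w -> w \in T) ->
  (#|T| < #|S|)%N -> #|S|%:R <= alpha * n%:R / 6 -> False.
Proof.
move=> sSU trapped ltTS S_small.
have eST : #|S|%:R * (alpha * d%:R / 3) <= (e_between adj S T)%:R.
  apply: e_between_ge1 => a aS; apply: le_trans (degU a (subsetP sSU a aS)) _.
  rewrite ler_nat; apply: subset_leq_card; apply/subsetP => w.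
  by rewrite !inE => /andP[wW aw]; rewrite aw (trapped a w aS wW aw).
have [T0|T_gt0] := posnP #|T|.
  move: eST; rewrite e_between_eq0 => [|a b _]; last by rewrite (card0_eq T0).
  by rewrite lt_geF // mulr_gt0 ?min_degree_gt0 // ltr0n (leq_trans _ ltTS).
apply: (no_sparse_small_pair (t := #|T|%:R) alpha_gt0 alpha_le1 d_large
          _ _ S_small eST).
- by rewrite ltr0n.
- by rewrite ltr_nat.
- by apply: mixing; rewrite -card_gt0 ?(leq_trans _ ltTS).
Qed.

Lemma small_W_set_expands {X : {set T2}} {B : {set T1}} : X \subset W ->
  (forall u w, w \in X -> u \in U -> adj u w -> u \in B) ->
  (#|B| < #|X|)%N -> #|X|%:R <= alpha * n%:R / 6 -> False.
Proof.
move=> sXW trapped ltBX X_small.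
have eBX : #|X|%:R * (alpha * d%:R / 3) <= (e_between adj B X)%:R.
  apply: e_between_ge2 => w wX; apply: le_trans (degW w (subsetP sXW w wX)) _.
  rewrite ler_nat; apply: subset_leq_card; apply/subsetP => u.
  by rewrite !inE => /andP[uU uw]; rewrite uw (trapped u w wX uU uw).
have [B0|B_gt0] := posnP #|B|.
  move: eBX; rewrite e_between_eq0 => [|a b]; last by rewrite (card0_eq B0).
  by rewrite lt_geF // mulr_gt0 ?min_degree_gt0 // ltr0n (leq_trans _ ltBX).
apply: (no_sparse_small_pair (t := #|B|%:R) alpha_gt0 alpha_le1 d_large
          _ _ X_small eBX).
- by rewrite ltr0n.
- by rewrite ltr_nat.
- rewrite mulrAC (mulrC #|X|%:R).
  by apply: mixing; rewrite -card_gt0 ?(leq_trans _ ltBX).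
Qed.

Lemma large_sets_adjacent {S : {set T1}} {X : {set T2}} : S \subset U ->
  alpha * n%:R / 6 < #|S|%:R -> alpha * n%:R / 6 < #|X|%:R ->
  (forall a b, a \in S -> b \in X -> ~~ adj a b) -> False.
Proof.
move=> sSU S_large X_large noEdge.
have an6_ge0 : 0 <= alpha * n%:R / 6 by rewrite divr_ge0 ?mulr_ge0 ?ler0n ?ltW.
have S_gt0 := le_lt_trans an6_ge0 S_large.
have X_gt0 := le_lt_trans an6_ge0 X_large.
have n_gt0 : 0 < n%:R :> R.
  rewrite -(pmulr_rgt0 _ alpha_gt0) -cardU.
  by apply: lt_le_trans S_gt0 _; rewrite ler_nat subset_leq_card.
apply: (no_empty_large_pair alpha_gt0 alpha_le1 d_large n_gt0 S_large X_large).
have := mixing S X; rewrite e_between_eq0 // mulr0n sub0r normrN.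
move=> /(_ _ _)/(le_lt_trans (ler_norm _)); apply; rewrite -card_gt0 -(ltr0n R) //.
Qed.

Lemma hall_condition_UW : hall_condition adj U W.
Proof.
move=> S sSU; set N := nbh adj W S; rewrite leqNgt; apply/negP => ltNS.
have [S_small|S_large] := lerP #|S|%:R (alpha * n%:R / 6).
  by apply: (small_U_set_expands sSU _ ltNS S_small) => a w; apply: mem_nbh.
have noEdge a b : a \in S -> b \in W :\: N -> ~~ adj a b.
  by move=> aS; rewrite inE => /andP[bN bW]; apply: contra bN; apply: mem_nbh.
have [W'_small|W'_large] := lerP #|W :\: N|%:R (alpha * n%:R / 6).
  apply: (small_W_set_expands (B := U :\: S) (subsetDl W N) _ _ W'_small).
    move=> u w wW' uU uw.
    by rewrite inE uU andbT; apply: contraL uw => uS; apply: noEdge uS wW'.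
  rewrite !cardsDS ?nbh_sub // -card_U_W.
  by have := subset_leq_card sSU; lia.
exact: large_sets_adjacent sSU S_large W'_large noEdge.
Qed.

End ExpanderMatching.

Theorem proposition3p11 (R : rcfType) (alpha : R) (d n : nat)
  (T1 T2 : finType) (adj : T1 -> T2 -> bool)
  (U : {set T1}) (W : {set T2}) :
  0 < alpha -> alpha <= 1 ->
  144 / alpha ^+ 2 <= d%:R ->
  #|T1| = n -> #|T2| = n ->
  (forall u : T1, #|[set w : T2 | adj u w]| = d) ->
  (forall w : T2, #|[set u : T1 | adj u w]| = d) ->
  (forall (A : {set T1}) (B : {set T2}), A != set0 -> B != set0 ->
     `| (e_between adj A B)%:R - d%:R / n%:R * #|A|%:R * #|B|%:R |
       < 2 * Num.sqrt (d%:R - 1 : R) * Num.sqrt (#|A|%:R * #|B|%:R : R)) ->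
  #|U|%:R = alpha * n%:R -> #|W|%:R = alpha * n%:R ->
  (forall w, w \in W -> alpha * d%:R / 3 <= (deg2 adj w U)%:R) ->
  (forall u, u \in U -> alpha * d%:R / 3 <= (deg1 adj u W)%:R) ->
  has_perfect_matching adj U W.
Proof.
move=> alpha_gt0 alpha_le1 d_bound cardT1 cardT2 _ _ mixing cardU cardW degW degU.
have d_large : 144 <= alpha ^+ 2 * d%:R.
  by move: d_bound; rewrite ler_pdivrMr ?exprn_gt0 // mulrC.
have [f0] : inhabited (T1 -> T2) by apply: map_of_card_le; rewrite cardT1 cardT2.
have hallUW :=
  hall_condition_UW alpha_gt0 alpha_le1 d_large mixing cardU cardW degW degU.
have [f fUW] := hall adj f0 hallUW.
by apply: (matches_perfect adj fUW); rewrite (card_U_W cardU cardW).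
Qed.
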